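(* Let $\lambda$ be a partition, $\pi$ an $R_\lambda$-permutation, and $T\in\mathcal{T}_\lambda$ with $T\le Y_\lambda(\pi)$. Write $Y:=Y_\lambda(\pi)$. If there exists a box $(l,k)$ of $\lambda$ such that $Y_l(k)<m(U^{(l,k)})$, then $\pi$ is $R_\lambda$-312-containing.
   Context: Fix $n\ge1$; $[m]=\{1,\dots,m\}$. A partition is $\lambda=(\lambda_1\ge\cdots\ge\lambda_n\ge0)\in\mathbb{Z}^n$, with boxes $(j,i)$ (column $j$, row $i$), $1\le j\le\lambda_1$, $1\le i\le\zeta_j:=\#\{i:\lambda_i\ge j\}$; $R_\lambda:=\{\zeta_j:\zeta_j<n\}$ with elements $q_1<\dots<q_r$, $q_0:=0$, $q_{r+1}:=n$. An $R_\lambda$-permutation is a permutation $\pi$ of $[n]$ (one-line notation) strictly increasing on each index set $\{q_{h-1}+1,\dots,q_h\}$; it is $R_\lambda$-312-containing if there exist $h\in[r-1]$ and $1\le a\le q_h<b\le q_{h+1}<c\le n$ with $\pi_b<\pi_c<\pi_a$. A tableau of shape $\lambda$ fills the boxes with values in $[n]$, strictly increasing down columns and weakly increasing along rows; $\mathcal{T}_\lambda$ is their set, ordered entrywise. $T_j(i)$ is the entry at column $j$ row $i$. The $\lambda$-key $Y_\lambda(\pi)$ is the tableau whose column $j$ consists of $\{\pi_1,\dots,\pi_{\zeta_j}\}$ in increasing order. Scanning paths: the earliest weakly increasing subsequence (EWIS) of a sequence $x_1,x_2,\dots$ is $x_{i_1},x_{i_2},\dots$ with $i_1=1$ and $i_u$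 the smallest index $>i_{u-1}$ with $x_{i_u}\ge x_{i_{u-1}}$. For $T\in\mathcal{T}_\lambda$ and $l\in[\lambda_1]$: consider the boxes of $T$ in columns $l,\dots,\lambda_1$, initially unmarked; for $k=\zeta_l,\zeta_l-1,\dots,1$ in turn, form the sequence of the lowest unmarked entries of columns $l,l+1,\dots$ (left to right, over columns still having unmarked boxes), take its EWIS and mark the contributing boxes; this set of boxes is the scanning path $\mathcal{P}(T;l,k)$ (and the last term of the EWIS is the entry of the scanning tableau $S(T)$ at $(l,k)$). For a box $(l,k)$, $U^{(l,k)}$ is the collection of entries of $T$ in columns $l+1,\dots,\lambda_1$ at boxes not lying on any of the paths $\mathcal{P}(T;l,\zeta_l),\dots,\mathcal{P}(T;l,k+1)$; $m(U^{(l,k)})$ is the maximum of these entries, or $1$ if there are none. *)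

(* All indices are 1-based, as in the paper. *)
From mathcomp Require Import all_boot.
Set Implicit Arguments. Unset Strict Implicit. Unset Printing Implicit Defensive.

Definition is_partition (n : nat) (lam : seq nat) : bool :=
  (size lam == n) && sorted geq lam.

Definition lam1 (lam : seq nat) : nat := nth 0 lam 0.

Definition zeta (lam : seq nat) (j : nat) : nat := count (fun x => j <= x) lam.

(* (j,i) is a box: column j, row i *)
Definition is_box (lam : seq nat) (j i : nat) : bool :=
  [&& 1 <= j, j <= lam1 lam, 1 <= i & i <= zeta lam j].

Definition Rseq (n : nat) (lam : seq nat) : seq nat :=
  sort leq (undup [seq zeta lam j | j <- iota 1 (lam1 lam) & zeta lam j < n]).

Definition rR (n : nat) (lam : seq nat) : nat := size (Rseq n lam).

Definition q (n : nat) (lam : seq nat) (h : nat) : nat :=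
  if h == 0 then 0
  else if h <= rR n lam then nth 0 (Rseq n lam) h.-1 else n.

Definition is_perm (n : nat) (pi : seq nat) : bool := perm_eq pi (iota 1 n).
Definition pi_at (pi : seq nat) (i : nat) : nat := nth 0 pi i.-1.

Definition R_perm (n : nat) (lam : seq nat) (pi : seq nat) : Prop :=
  is_perm n pi /\
  forall h i, 1 <= h <= (rR n lam).+1 ->
    q n lam h.-1 + 1 <= i -> i < q n lam h -> pi_at pi i < pi_at pi i.+1.

Definition R_312_containing (n : nat) (lam : seq nat) (pi : seq nat) : Prop :=
  exists h a b c, [/\ 1 <= h <= (rR n lam).-1,
    [/\ 1 <= a, a <= q n lam h, q n lam h < b, b <= q n lam h.+1 & q n lam h.+1 < c],
    c <= n & pi_at pi b < pi_at pi c < pi_at pi a].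

(* tableaux: T j i = entry in column j, row i (only values at boxes matter) *)
Definition is_tableau (n : nat) (lam : seq nat) (T : nat -> nat -> nat) : Prop :=
  [/\ forall j i, is_box lam j i -> 1 <= T j i <= n,
      forall j i, is_box lam j i -> is_box lam j i.+1 -> T j i < T j i.+1
    & forall j i, is_box lam j i -> is_box lam j.+1 i -> T j i <= T j.+1 i].

Definition key (lam : seq nat) (pi : seq nat) (j i : nat) : nat :=
  nth 0 (sort leq (take (zeta lam j) pi)) i.-1.

Definition tab_le (lam : seq nat) (T T' : nat -> nat -> nat) : Prop :=
  forall j i, is_box lam j i -> T j i <= T' j i.

Fixpoint ewis_aux (last : nat) (s : seq (nat * nat)) : seq (nat * nat) :=
  match s with
  | [::] => [::]
  | x :: s' => if last <= x.2 then x :: ewis_aux x.2 s' else ewis_aux last s'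
  end.
Definition ewis (s : seq (nat * nat)) : seq (nat * nat) :=
  if s is x :: s' then x :: ewis_aux x.2 s' else [::].

(* In each column the marked boxes are always the lowest ones, so
   the marking state is recorded by cnt j = number of marked boxes in column j;
   the lowest unmarked box of column j is then row zeta_j - cnt j. *)
Definition lowest_seq (lam : seq nat) (T : nat -> nat -> nat) (l : nat)
  (cnt : nat -> nat) : seq (nat * nat) :=
  [seq (j, T j (zeta lam j - cnt j)) |
     j <- [seq j <- index_iota l (lam1 lam).+1 | cnt j < zeta lam j]].

Definition step_cols (lam : seq nat) (T : nat -> nat -> nat) (l : nat)
  (cnt : nat -> nat) : seq nat := [seq x.1 | x <- ewis (lowest_seq lam T l cnt)].

Definition step (lam : seq nat) (T : nat -> nat -> nat) (l : nat)
  (cnt : nat -> nat) : nat -> nat :=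
  fun j => cnt j + (j \in step_cols lam T l cnt).

Definition state (lam : seq nat) (T : nat -> nat -> nat) (l t : nat) : nat -> nat :=
  iter t (step lam T l) (fun _ => 0).

(* the scanning path P(T; l, k), a list of boxes (column, row);
   it is produced at step number zeta_l - k (counting from 0). *)
Definition scan_path (lam : seq nat) (T : nat -> nat -> nat) (l k : nat)
  : seq (nat * nat) :=
  let cnt := state lam T l (zeta lam l - k) in
  [seq (j, zeta lam j - cnt j) | j <- step_cols lam T l cnt].

Definition U_entries (lam : seq nat) (T : nat -> nat -> nat) (l k : nat) : seq nat :=
  [seq T p.1 p.2 |
     p <- [seq (j, i) | j <- index_iota l.+1 (lam1 lam).+1,
                        i <- iota 1 (zeta lam j)]
     & ~~ has (fun k' => p \in scan_path lam T l k') (index_iota k.+1 (zeta lam l).+1)].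

Definition mU (lam : seq nat) (T : nat -> nat -> nat) (l k : nat) : nat :=
  let U := U_entries lam T l k in
  if U is [::] then 1 else foldr maxn 0 U.

From mathcomp Require Import all_boot zify.
From Stdlib Require Import Classical.
Set Implicit Arguments. Unset Strict Implicit. Unset Printing Implicit Defensive.

(* Suppose pi has no R_lam-312 pattern and write N_a(z) for the number of entries >= z
   among pi_1, ..., pi_(zeta_a), i.e. in column a of Y; then T <= Y says that an entry z
   lying d rows above the bottom of column b has d < N_b(z).
   Scanning columns l, l+1, ... preserves the following invariant: when c_j boxes of each
   column j are marked, for l <= a <= b the unmarked part of column b is no taller than that
   of column a, and an entry z lying d rows above the lowest unmarked box of column b has
   c_a + d < N_a(z).  The only delicate step is a path through column a that skips a column
   b > a: the path then meets an entry larger than the lowest unmarked entry L of column b,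
   and for an entry z of column b either every value in [z, L] occurs among
   pi_1, ..., pi_(zeta_a), or 312-avoidance forces pi_(zeta_b + 1), ..., pi_(zeta_a) to be
   >= z; either way N_a(z) is large enough.
   After zeta_l - k steps every box of U^(l,k) lies weakly above the lowest unmarked box of
   its column, whose entry z has N_l(z) > zeta_l - k, that is z <= Y_l(k). *)

Lemma sorted_leq_nth_count (s : seq nat) i z : sorted leq s -> i < size s ->
  (z <= nth 0 s i) = (size s - i <= count (leq z) s).
Proof.
move=> s_sorted lt_i_s.
have nth_mono j j' : j <= j' -> j' < size s -> nth 0 s j <= nth 0 s j'.
  by move=> le_jj' lt_j's; apply: (sorted_leq_nth leq_trans leqnn) => //; rewrite inE; lia.
have count_split k : count (leq z) s = count (leq z) (take k s) + count (leq z) (drop k s).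
  by rewrite -count_cat cat_take_drop.
apply/idP/idP; [move=> le_z | move=> le_count].
- have all_drop : count (leq z) (drop i s) = size (drop i s).
    apply/eqP; rewrite -all_count; apply/(all_nthP 0) => j; rewrite size_drop nth_drop => lt_j.
    by apply: leq_trans le_z (nth_mono _ _ (leq_addr _ _) _); lia.
  by rewrite (count_split i) all_drop size_drop leq_addl.
- rewrite leqNgt; apply/negP => lt_nth.
  have none_take : count (leq z) (take i.+1 s) = 0.
    apply/eqP; rewrite -leqn0 leqNgt -has_count; apply/(has_nthP 0) => -[j].
    rewrite size_takel // => lt_j; rewrite nth_take // leqNgt => /negP; apply.
    by apply: leq_ltn_trans lt_nth; apply: nth_mono; lia.
  have := count_size (leq z) (drop i.+1 s).
  by move: le_count; rewrite (count_split i.+1) none_take size_drop; lia.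
Qed.

Lemma count_leq_interval (s : seq nat) z L : z <= L.+1 ->
  {subset iota z (L.+1 - z) <= s} -> L.+1 - z + count (leq L.+1) s <= count (leq z) s.
Proof.
move=> le_zL sub_s.
have -> : count (leq z) s = count (fun p => z <= p <= L) s + count (leq L.+1) s.
  by elim: s {sub_s} => //= x s ->; lia.
rewrite leq_add2r -size_filter -[X in X <= _](size_iota z).
apply: uniq_leq_size (iota_uniq _ _) _ => y y_in.
by rewrite mem_filter sub_s // andbT; move: y_in; rewrite mem_iota; lia.
Qed.

Lemma foldr_maxn_le (s : seq nat) m : {in s, forall x, x <= m} -> foldr maxn 0 s <= m.
Proof.
elim: s => //= x s IH le_m; rewrite geq_max le_m ?mem_head // IH // => y y_s.
by rewrite le_m // in_cons y_s orbT.
Qed.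

Lemma unit_step_crossing (f : nat -> nat) : f 0 = 0 -> (forall t, f t <= f t.+1 <= (f t).+1) ->
  forall s m, m < f s -> exists2 t, t < s & f t = m /\ f t.+1 = m.+1.
Proof.
move=> f0 f_step; elim=> [|s IH] m lt_m; first by rewrite f0 in lt_m.
have [lt_ms|le_sm] := ltnP m (f s).
  by have [t lt_ts crossing] := IH m lt_ms; exists t => //; lia.
by exists s => //; have := f_step s; lia.
Qed.

Lemma ewis_cons2 (p x : nat * nat) s :
  ewis [:: p, x & s] = if p.2 <= x.2 then p :: ewis (x :: s) else ewis (p :: s).
Proof. by rewrite /ewis /=; case: ifP. Qed.

Lemma ewis_sub s : {subset ewis s <= s}.
Proof.
case: s => // p s; elim: s p => [|x s IH] p y //; rewrite ewis_cons2.
case: ifP => _; rewrite !inE.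
- by case/orP=> [->//|/IH]; rewrite inE => ->; rewrite orbT.
- by move/IH; rewrite !inE => /orP [->|->]; rewrite ?orbT.
Qed.

Lemma ewis_skipped (s : seq (nat * nat)) : sorted ltn (map fst s) ->
  forall x, x \in s -> x.1 \notin map fst (ewis s) ->
  forall y, y \in ewis s -> y.1 < x.1 ->
  exists2 y', y' \in ewis s & (y.1 <= y'.1 < x.1) && (x.2 < y'.2).
Proof.
case: s => // p s; elim: s p => [|z s IH] p s_sorted x.
  by rewrite mem_seq1 => /eqP-> /=; rewrite inE eqxx.
have [lt_pz z_s_sorted] : p.1 < z.1 /\ sorted ltn (map fst (z :: s)) by case/andP: s_sorted.
have lt_z_s w : w \in s -> z.1 < w.1.
  by move=> w_s; apply: (allP (order_path_min ltn_trans z_s_sorted)); apply: map_f.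
have p_s_sorted : sorted ltn (map fst (p :: s)) := path_le ltn_trans lt_pz z_s_sorted.
rewrite ewis_cons2; case: ifP => [le_pz | /negbT]; last rewrite -ltnNge => lt_zp.
- rewrite in_cons => /predU1P [-> | x_zs]; first by rewrite /= inE eqxx.
  rewrite map_cons in_cons negb_or => /andP [_ x_new] y.
  rewrite in_cons => /predU1P [-> | y_e] lt_yx; last first.
    have [y' y'_e ?] := IH z z_s_sorted x x_zs x_new y y_e lt_yx.
    by exists y' => //; rewrite in_cons y'_e orbT.
  have lt_zx : z.1 < x.1.
    move: x_zs; rewrite in_cons => /predU1P [Ex|/lt_z_s //].
    by move: x_new; rewrite Ex /ewis /= inE eqxx.
  have [y' y'_e /andP [/andP [le_zy' lt_y'x] lt_xy']] :=
    IH z z_s_sorted x x_zs x_new z (mem_head _ _) lt_zx.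
  exists y'; first by rewrite in_cons y'_e orbT.
  by rewrite lt_y'x lt_xy' !andbT; apply: leq_trans (ltnW lt_pz) le_zy'.
- rewrite !in_cons => /predU1P [-> | /predU1P [Ex | x_s]] x_new y y_e lt_yx.
  + by rewrite eqxx in x_new.
  + have Ey : y = p.
      move: y_e => /ewis_sub; rewrite in_cons => /predU1P [//|/lt_z_s].
      by rewrite -Ex => /(ltn_trans lt_yx); rewrite ltnn.
    by exists p; rewrite ?mem_head // Ey Ex leqnn lt_pz lt_zp.
  + have x_ps : x \in p :: s by rewrite in_cons x_s orbT.
    exact: IH p_s_sorted x x_ps x_new y y_e lt_yx.
Qed.

Lemma leq_zeta lam j j' : j <= j' -> zeta lam j' <= zeta lam j.
Proof. by move=> le_jj'; apply: sub_count => x /= /(leq_trans le_jj'). Qed.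

Lemma zeta_le n lam j : is_partition n lam -> zeta lam j <= n.
Proof. by case/andP => /eqP <- _; apply: count_size. Qed.

Lemma zeta_in_Rseq n lam j : 1 <= j <= lam1 lam -> zeta lam j < n -> zeta lam j \in Rseq n lam.
Proof.
move=> j_col lt_zeta_n; rewrite /Rseq mem_sort mem_undup; apply: map_f.
by rewrite mem_filter lt_zeta_n mem_iota; lia.
Qed.

(* Positions are 0-based here: [nth 0 pi i] is pi_(i+1). *)
Lemma R_312_containing_of_pattern n lam pi (i0 i1 i2 zb za : nat) :
  zb \in Rseq n lam -> za \in Rseq n lam ->
  i0 < zb <= i1 -> i1 < za <= i2 -> i2 < n ->
  nth 0 pi i1 < nth 0 pi i2 < nth 0 pi i0 -> R_312_containing n lam pi.
Proof.
set rs := Rseq n lam => zb_rs za_rs pos_i0 pos_i1 pos_i2 pattern.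
have rs_mono i j : i <= j -> j < size rs -> nth 0 rs i <= nth 0 rs j.
  have rs_sorted : sorted leq rs by apply: sort_sorted; exact: leq_total.
  by move=> le_ij lt_j; apply: (sorted_leq_nth leq_trans leqnn) => //; rewrite inE; lia.
(* h is chosen with q_h <= i1 < q_(h+1). *)
set h := find (fun x => i1 < x) rs.
have has_above : has (fun x => i1 < x) rs by apply/hasP; exists za => //; lia.
have lt_h : h < size rs by rewrite -has_find.
have above_h : i1 < nth 0 rs h := nth_find 0 has_above.
have below_h i : i < h -> nth 0 rs i <= i1.
  by move=> lt_ih; rewrite leqNgt (before_find 0 lt_ih).
have [lt_zb_h zb_le_q] : index zb rs < h /\ zb <= nth 0 rs h.-1.
  have zb_nth : nth 0 rs (index zb rs) = zb by rewrite nth_index.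
  have lt_ib : index zb rs < h.
    rewrite ltnNge; apply/negP => le_h_ib.
    by have := rs_mono _ _ le_h_ib; rewrite zb_nth index_mem => /(_ zb_rs); lia.
  by split; rewrite // -[X in X <= _]zb_nth; apply: rs_mono; lia.
have q_le_za : nth 0 rs h <= za.
  have za_nth : nth 0 rs (index za rs) = za by rewrite nth_index.
  rewrite -za_nth; apply: rs_mono; last by rewrite index_mem.
  by rewrite leqNgt; apply/negP => /below_h; rewrite za_nth; lia.
have q_h : q n lam h = nth 0 rs h.-1 by rewrite /q /rR -/rs ifN_eq ?ifT; lia.
have q_h1 : q n lam h.+1 = nth 0 rs h by rewrite /q /rR -/rs /= ifT.
exists h, i0.+1, i1.+1, i2.+1; rewrite q_h q_h1 /rR -/rs /pi_at /=.
have := below_h h.-1; split; [lia | split; lia | lia | lia].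
Qed.

Definition key_count (lam pi : seq nat) (j z : nat) : nat :=
  count (leq z) (take (zeta lam j) pi).

Lemma key_count_split lam pi a b z : a <= b ->
  key_count lam pi a z =
  key_count lam pi b z + count (leq z) (drop (zeta lam b) (take (zeta lam a) pi)).
Proof.
move=> le_ab; rewrite /key_count -count_cat.
by rewrite -{1}(cat_take_drop (zeta lam b) (take (zeta lam a) pi)) take_takel ?leq_zeta.
Qed.

Lemma leq_key_count lam pi a b z : a <= b -> key_count lam pi b z <= key_count lam pi a z.
Proof. by move=> le_ab; rewrite (key_count_split _ _ _ le_ab) leq_addr. Qed.

Lemma key_count_anti lam pi j z z' : z <= z' -> key_count lam pi j z' <= key_count lam pi j z.
Proof. by move=> le_zz'; apply: sub_count => x /= /(leq_trans le_zz'). Qed.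

Section Key.

Variables (n : nat) (lam pi : seq nat).
Hypotheses (lam_part : is_partition n lam) (pi_perm : is_perm n pi).

Lemma size_pi : size pi = n.
Proof. by rewrite (perm_size pi_perm) size_iota. Qed.

Lemma size_take_zeta j : size (take (zeta lam j) pi) = zeta lam j.
Proof. by rewrite size_takel // size_pi (zeta_le _ lam_part). Qed.

Lemma leq_key j k z : 1 <= k <= zeta lam j ->
  (z <= key lam pi j k) = (zeta lam j - k < key_count lam pi j z).
Proof.
move=> k_col; rewrite /key /key_count -(count_sort leq) sorted_leq_nth_count.
- by rewrite size_sort size_take_zeta; congr (_ <= _); lia.
- by apply: sort_sorted; exact: leq_total.
- by rewrite size_sort size_take_zeta; lia.
Qed.

Lemma key_gt0 j k : 1 <= k <= zeta lam j -> 0 < key lam pi j k.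
Proof.
move=> k_col; have : key lam pi j k \in pi.
  rewrite /key; apply: (@mem_take (zeta lam j)); rewrite -(mem_sort leq); apply: mem_nth.
  by rewrite size_sort size_take_zeta; lia.
by rewrite (perm_mem pi_perm) mem_iota => /andP [].
Qed.

Lemma tab_le_key_count T j i : tab_le lam T (key lam pi) -> is_box lam j i ->
  zeta lam j - i < key_count lam pi j (T j i).
Proof.
by move=> le_TY box; rewrite -leq_key ?le_TY //; move: box; rewrite /is_box; lia.
Qed.

End Key.

Section Tableau.

Variables (n : nat) (lam : seq nat) (T : nat -> nat -> nat).
Hypothesis T_tab : is_tableau n lam T.

Lemma tableau_range j i : 1 <= j <= lam1 lam -> 1 <= i <= zeta lam j -> 1 <= T j i <= n.
Proof. by case: T_tab => T_range _ _ *; apply: T_range; rewrite /is_box; lia. Qed.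

Lemma tableau_row a b i : 1 <= a <= b -> b <= lam1 lam -> 1 <= i <= zeta lam b ->
  T a i <= T b i.
Proof.
case: T_tab => _ _ T_row /andP [a_pos le_ab]; rewrite -(subnKC le_ab).
elim: (b - a) => [|d IH] b_col i_row; first by rewrite addn0.
have := leq_zeta lam (leqnSn (a + d)); rewrite addnS in b_col i_row *.
by move=> le_zeta; apply: leq_trans (IH _ _) (T_row (a + d) i _ _); rewrite ?/is_box; lia.
Qed.

Lemma tableau_col j i d : 1 <= j <= lam1 lam -> 1 <= i -> i + d <= zeta lam j ->
  T j i + d <= T j (i + d).
Proof.
case: T_tab => _ T_col _ j_col i_pos; elim: d => [|d IH] le_zeta; first by rewrite !addn0.
rewrite addnS in le_zeta *; have := IH (ltnW le_zeta).
have box : is_box lam j (i + d) by rewrite /is_box; lia.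
have box_below : is_box lam j (i + d).+1 by rewrite /is_box; lia.
by have := T_col j (i + d) box box_below; lia.
Qed.

End Tableau.

Section Scanning.

Variables (lam : seq nat) (T : nat -> nat -> nat) (l : nat).

Local Notation cols := (step_cols lam T l).
Local Notation state := (state lam T l).

Lemma stateS t : state t.+1 = step lam T l (state t).
Proof. by []. Qed.

Lemma mem_step_cols c j : j \in cols c -> (l <= j <= lam1 lam) && (c j < zeta lam j).
Proof.
case/mapP => _ /ewis_sub /mapP [j' + ->] ->.
by rewrite mem_filter mem_index_iota /= => /andP [-> ?]; rewrite andbT; lia.
Qed.

Lemma step_cols_head c : l <= lam1 lam -> c l < zeta lam l -> l \in cols c.
Proof.
move=> l_col alive; rewrite /step_cols /lowest_seq /index_iota.
have -> : (lam1 lam).+1 - l = (lam1 lam - l).+1 by lia.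
by rewrite /= alive mem_head.
Qed.

Lemma step_cols_skipped c a b : l <= b <= lam1 lam -> c b < zeta lam b ->
  b \notin cols c -> a \in cols c -> a < b ->
  exists2 a', a' \in cols c &
    (a <= a' < b) && (T b (zeta lam b - c b) < T a' (zeta lam a' - c a')).
Proof.
move=> b_col b_alive b_skipped /mapP [y y_path ->] lt_yb.
set alive := [seq j <- index_iota l (lam1 lam).+1 | c j < zeta lam j].
have tags_sorted : sorted ltn (map fst (lowest_seq lam T l c)).
  rewrite /lowest_seq -/alive -map_comp map_id_in //.
  by apply: sorted_filter; [exact: ltn_trans | exact: iota_ltn_sorted].
have b_lowest : (b, T b (zeta lam b - c b)) \in lowest_seq lam T l c.
  by apply: (map_f (fun j => (j, T j (zeta lam j - c j)))); rewrite mem_filter b_alive mem_index_iota; lia.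
have [y' y'_path] := ewis_skipped tags_sorted b_lowest b_skipped y_path lt_yb.
case/mapP: (ewis_sub y'_path) => a' _ y'_eq; rewrite y'_eq /= in y'_path * => a'_between.
by exists a' => //; apply/mapP; exists (a', T a' (zeta lam a' - c a')).
Qed.

Lemma state_head t : l <= lam1 lam -> t <= zeta lam l -> state t l = t.
Proof.
move=> l_col; elim: t => [|t IH] // lt_t.
have alive : state t l < zeta lam l by rewrite IH //; lia.
by rewrite stateS /step step_cols_head // IH ?addn1 //; lia.
Qed.

Lemma state_marked_at k j i : 1 <= i <= zeta lam j ->
  i > zeta lam j - state (zeta lam l - k) j ->
  exists2 k', k < k' <= zeta lam l & (j, i) \in scan_path lam T l k'.
Proof.
set s := zeta lam l - k => i_row marked.
have state_incr t : state t j <= state t.+1 j <= (state t j).+1.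
  by rewrite stateS /step; case: (_ \in _); lia.
have crossed : zeta lam j - i < state s j by lia.
have [t lt_ts [at_t at_t1]] := unit_step_crossing erefl state_incr crossed.
exists (zeta lam l - t); first lia.
rewrite /scan_path; have -> : zeta lam l - (zeta lam l - t) = t by lia.
apply/mapP; exists j; last by congr (_, _); lia.
by move: at_t1; rewrite stateS /step at_t; case: (_ \in _) => //=; lia.
Qed.

End Scanning.

Section Avoidance.

Variables (n : nat) (lam pi : seq nat) (T : nat -> nat -> nat).
Hypotheses (lam_part : is_partition n lam) (pi_perm : is_perm n pi).
Hypotheses (T_tab : is_tableau n lam T) (le_TY : tab_le lam T (key lam pi)).
Hypothesis pi_avoids : ~ R_312_containing n lam pi.

Lemma key_segment_geq a b (y y' z : nat) : 1 <= a <= b -> b <= lam1 lam ->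
  y \in pi -> y \notin take (zeta lam a) pi -> y' \in take (zeta lam b) pi -> y < y' -> z <= y ->
  all (leq z) (drop (zeta lam b) (take (zeta lam a) pi)).
Proof.
move=> ab_col b_col y_pi y_late y'_early lt_yy' le_zy.
have le_zeta_ab : zeta lam b <= zeta lam a by apply: leq_zeta; lia.
have index_y : zeta lam a <= index y pi < n.
  by rewrite -(size_pi pi_perm) index_mem y_pi andbT leqNgt -in_take.
apply/(all_nthP 0) => i; rewrite size_drop (size_take_zeta lam_part pi_perm) => lt_i.
rewrite nth_drop nth_take; last lia.
rewrite leqNgt; apply/negP => small; apply: pi_avoids.
apply: (R_312_containing_of_pattern (i0 := index y' pi) (i1 := zeta lam b + i) (i2 := index y pi)
  (zb := zeta lam b) (za := zeta lam a)).
- by apply: zeta_in_Rseq; lia.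
- by apply: zeta_in_Rseq; lia.
- by rewrite index_ltn // leq_addr.
- by case/andP: index_y => -> _; rewrite andbT; lia.
- by case/andP: index_y.
- by rewrite !nth_index ?(mem_take y'_early) // lt_yy' (leq_trans small le_zy).
Qed.

Lemma key_count_column_below a b ca rb d : 1 <= a <= b -> b <= lam1 lam -> rb <= zeta lam b ->
  rb < zeta lam a - ca -> ca < key_count lam pi a (T b rb).+1 -> d < rb ->
  ca + d.+1 < key_count lam pi a (T b (rb - d)).
Proof.
move=> ab_col b_col rb_col lt_rb lt_ca lt_d.
have [b_col1 le_ab] : 1 <= b <= lam1 lam /\ a <= b by lia.
set z := T b (rb - d); set L := T b rb in lt_ca *.
have le_zL : z + d <= L.
  have [rb_pos fits] : 1 <= rb - d /\ rb - d + d <= zeta lam b by lia.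
  by have := tableau_col T_tab b_col1 rb_pos fits; rewrite subnK ?(ltnW lt_d).
have [z_pos L_le] : 1 <= z /\ L <= n.
  by have := tableau_range T_tab b_col1 (i := rb - d); have := tableau_range T_tab b_col1 (i := rb); lia.
case: (boolP (all (mem (take (zeta lam a) pi)) (iota z (L.+1 - z)))) => [z_to_L_early | ].
  have le_zL1 : z <= L.+1 by lia.
  have := count_leq_interval le_zL1 (allP z_to_L_early).
  by move: lt_ca; rewrite /key_count; lia.
move=> /allPn [y]; rewrite mem_iota => y_between y_late.
have y_pi : y \in pi by rewrite (perm_mem pi_perm) mem_iota; lia.
have /hasP [y' y'_early le_Ly'] : has (leq L) (take (zeta lam b) pi).
  have box_b : is_box lam b rb by rewrite /is_box; lia.
  by have := tab_le_key_count lam_part pi_perm le_TY box_b; rewrite -/L has_count /key_count; lia.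
have lt_yy' : y < y'.
  rewrite ltn_neqAle (leq_trans _ le_Ly') ?andbT; last lia.
  apply: contraNneq y_late => ->; apply: (@mem_take (zeta lam b)).
  by rewrite take_takel ?leq_zeta //; lia.
have le_zy : z <= y by lia.
have := key_segment_geq ab_col b_col y_pi y_late y'_early lt_yy' le_zy.
rewrite all_count size_drop (size_take_zeta lam_part pi_perm) => /eqP seg_count.
have box_bd : is_box lam b (rb - d) by rewrite /is_box; lia.
have := tab_le_key_count lam_part pi_perm le_TY box_bd.
by rewrite (key_count_split _ _ _ le_ab) seg_count -/z; lia.
Qed.

Variable l : nat.
Hypothesis l_pos : 0 < l.

Local Notation cols := (step_cols lam T l).
Local Notation rest c j := (zeta lam j - c j)%N.

Definition scan_inv (c : nat -> nat) : Prop :=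
  forall a b, l <= a -> a <= b -> b <= lam1 lam ->
    rest c b <= rest c a /\
    forall d, d < rest c b -> c a + d < key_count lam pi a (T b (rest c b - d)).

Lemma scan_inv0 : scan_inv (fun _ => 0).
Proof.
move=> a b l_a le_ab b_col; rewrite !subn0; split=> [|d lt_d]; first exact: leq_zeta.
have box : is_box lam b (zeta lam b - d) by rewrite /is_box; lia.
have := tab_le_key_count lam_part pi_perm le_TY box.
by have := leq_key_count lam pi (T b (zeta lam b - d)) le_ab; lia.
Qed.

Lemma scan_inv_skipped c a b : scan_inv c -> l <= a < b -> b <= lam1 lam ->
  a \in cols c -> b \notin cols c -> 0 < rest c b ->
  rest c b < rest c a /\ c a < key_count lam pi a (T b (rest c b)).+1.
Proof.
move=> inv ab_col b_col a_path b_skipped b_alive.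
have [b_col' b_alive' lt_ab] : [/\ l <= b <= lam1 lam, c b < zeta lam b & a < b] by split; lia.
have [a' a'_path /andP [/andP [le_aa' lt_a'b] lt_T]] :=
  step_cols_skipped b_col' b_alive' b_skipped a_path lt_ab.
have /andP [a'_col a'_alive] := mem_step_cols a'_path.
have lt_rest : rest c b < rest c a'.
  rewrite ltnNge; apply/negP => le_rest.
  have [a'_b a'_row a'_pos] : [/\ 1 <= a' <= b, 1 <= rest c a' <= zeta lam b & 1 <= rest c a'].
    by split; lia.
  have [b_col1 fits] : 1 <= b <= lam1 lam /\ rest c a' + (rest c b - rest c a') <= zeta lam b.
    by split; lia.
  have := tableau_row T_tab a'_b b_col a'_row.
  by have := tableau_col T_tab b_col1 a'_pos fits; rewrite subnKC //; lia.
have l_a : l <= a by lia.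
have [le_rest_aa' inv_aa'] := inv a a' l_a le_aa' (proj2 (andP a'_col)).
split; first lia.
have a'_nonempty : 0 < rest c a' by lia.
have := inv_aa' 0 a'_nonempty; rewrite addn0 subn0 => /leq_trans; apply.
exact: key_count_anti.
Qed.

Lemma scan_inv_step c : scan_inv c -> scan_inv (step lam T l c).
Proof.
move=> inv a b l_a le_ab b_col; rewrite /step.
have [le_rest inv_ab] := inv a b l_a le_ab b_col.
case: (boolP (b \in cols c)) => [b_path | b_skipped].
  have /andP [_ b_alive] := mem_step_cols b_path.
  split=> [|d lt_d]; first by case: (a \in _); lia.
  have lt_d1 : d.+1 < rest c b by lia.
  have := inv_ab d.+1 lt_d1; have -> : rest c b - d.+1 = zeta lam b - (c b + true) - d by lia.
  by case: (a \in _); lia.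
case: (boolP (a \in cols c)) => [a_path | a_skipped]; last by rewrite !addn0.
have lt_ab : a < b by rewrite ltn_neqAle le_ab andbT; apply: contraNneq b_skipped => <-.
have [b_done | b_alive] := posnP (rest c b).
  by rewrite addn0 b_done; split=> // d.
have ab_col : l <= a < b by lia.
have [lt_rest lt_ca] := scan_inv_skipped inv ab_col b_col a_path b_skipped b_alive.
rewrite addn0; split=> [|d lt_d]; first lia.
have ab_col1 : 1 <= a <= b by lia.
have := key_count_column_below ab_col1 b_col (leq_subr _ _) lt_rest lt_ca lt_d.
by rewrite /=; lia.
Qed.

Lemma scan_inv_state t : scan_inv (state lam T l t).
Proof. by elim: t => [|t]; [exact: scan_inv0 | exact: scan_inv_step]. Qed.

Lemma U_entries_le_key k : l <= lam1 lam -> 1 <= k <= zeta lam l ->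
  {in U_entries lam T l k, forall u, u <= key lam pi l k}.
Proof.
move=> l_col k_row u /mapP [p + ->]; rewrite mem_filter.
case/andP => unmarked /allpairsPdep [j [i [j_col i_row p_eq]]]; rewrite {}p_eq /= in unmarked *.
move: j_col i_row; rewrite mem_index_iota mem_iota => j_col i_row.
have {}i_row : 1 <= i <= zeta lam j by lia.
set c := state lam T l (zeta lam l - k).
have i_unmarked : i <= rest c j.
  rewrite leqNgt; apply/negP => marked; move/hasP: unmarked; apply.
  have [k' k'_range on_path] := state_marked_at i_row marked.
  by exists k' => //; rewrite mem_index_iota; lia.
have j_col1 : 1 <= j <= lam1 lam by lia.
have i_pos : 1 <= i by lia.
have fits : i + (rest c j - i) <= zeta lam j by lia.
have := tableau_col T_tab j_col1 i_pos fits; rewrite subnKC // => le_T.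
have [l_j j_le] : l <= j /\ j <= lam1 lam by lia.
have [_ inv_lj] := scan_inv_state (zeta lam l - k) (leqnn l) l_j j_le.
have lt_count : zeta lam l - k < key_count lam pi l (T j (rest c j)).
  have nonempty : 0 < rest c j by lia.
  by have := inv_lj 0 nonempty; rewrite addn0 subn0 state_head //; lia.
apply: leq_trans (leq_trans (leq_addr _ _) le_T) _.
by rewrite (leq_key lam_part pi_perm).
Qed.

End Avoidance.

Theorem proposition6p2 (n : nat) (lam : seq nat) (pi : seq nat)
    (T : nat -> nat -> nat) :
  1 <= n ->
  is_partition n lam ->
  R_perm n lam pi ->
  is_tableau n lam T ->
  tab_le lam T (key lam pi) ->
  (exists l k, is_box lam l k /\ key lam pi l k < mU lam T l k) ->
  R_312_containing n lam pi.
Proof.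
move=> _ lam_part [pi_perm _] T_tab le_TY [l [k [/and4P [l_pos l_col k_pos k_row] lt_key]]].
apply: NNPP => pi_avoids.
have k_col : 1 <= k <= zeta lam l by rewrite k_pos k_row.
have U_le := U_entries_le_key lam_part pi_perm T_tab le_TY pi_avoids l_pos l_col k_col.
have : mU lam T l k <= key lam pi l k.
  rewrite /mU; case: (U_entries lam T l k) U_le => [|u U] U_le.
  - exact: (key_gt0 lam_part pi_perm k_col).
  - by apply: foldr_maxn_le => x /U_le.
lia.
Qed.
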